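(* Let $p$ be an odd prime, $\omega=e^{2\pi i/p}$, $m\ge1$, $Q=T_{(p^m)}$ and $K=K_Q(p)$. Let $M=S_\xi X^b$ and $M'=S_{\xi'}X^{b'}$ be elements of $K$ (with $S_\xi,S_{\xi'}\in Q$, $b,b'\in\mathbb{Z}_p$) such that $[M,M']=\omega^c\mathbbm{1}$ for some $c\in\mathbb{Z}_p$. Then: (1) if $b=b'=0$, then $M,M'\in Q$ and $c=0$; (2) if $b\neq0$ and $b'=0$, then $M'\in T_{(p)}$, and if moreover $c=0$ then $M'\in Z(K)$; (3) if $b\neq0$ and $b'\neq0$, then there exist $a,y\in\mathbb{Z}_p$ and $S_\chi\in T_{(p)}$ such that $\omega^aM'=(MS_\chi)^y$, where $\chi(q)=\omega^{c'q}$ with $c'\in\mathbb{Z}_p$ satisfying $b'c'=-c$, and $yb=b'$; if moreover $c=0$, then $\omega^aM'=M^y$.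
   Context: Let $\{|q\rangle:q\in\mathbb{Z}_p\}$ be the computational basis of $\mathbb{C}^p$ and $X|q\rangle=|q+1\rangle$. For $\xi:\mathbb{Z}_p\to U(1)$ let $S_\xi=\mathrm{diag}(\xi(0),\dots,\xi(p-1))$. $T=\{S_\xi:\prod_{q}\xi(q)=1\}$ and $T_{(p^k)}=\{S\in T:S^{p^k}=\mathbbm{1}\}$. $K_Q(p)$ is the subgroup of $SU(p)$ generated by all $S_\xi X^b$ with $S_\xi\in Q$, $b\in\mathbb{Z}_p$. $Z(K)$ denotes the center of $K$. The commutator is $[A,B]=ABA^{-1}B^{-1}$. *)

From HB Require Import structures.
From mathcomp Require Import all_boot all_order all_algebra all_field.
Set Implicit Arguments. Unset Strict Implicit. Unset Printing Implicit Defensive.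
Import Order.TTheory GRing.Theory Num.Theory.
Local Open Scope ring_scope.

(* Matrices over algC (algebraic complex numbers), indexed by 'I_p = Z_p. *)

(* omega = e^{2 pi i / p}:  p.-root (-1) is e^{i pi / p} (minimal argument). *)
Definition omega (p : nat) : algC := (p.-root (-1)) ^+ 2.

(* shift X |q> = |q+1>  : entry (i,j) is 1 iff i = j+1 mod p *)
Definition Xmat (p : nat) : 'M[algC]_p :=
  \matrix_(i < p, j < p) ((nat_of_ord i == (j.+1 %% p)%N)%:R).

Definition Smat (p : nat) (xi : 'I_p -> algC) : 'M[algC]_p :=
  diag_mx (\row_q xi q).

Definition inT (p : nat) (S : 'M[algC]_p) : Prop :=
  exists xi : 'I_p -> algC,
    S = Smat xi /\ (forall q, `|xi q| = 1) /\ \prod_(q < p) xi q = 1.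

Definition inTk (p k : nat) (S : 'M[algC]_p) : Prop :=
  inT S /\ S ^+ (p ^ k) = 1%:M.

Inductive inK (p : nat) (Q : 'M[algC]_p -> Prop) : 'M[algC]_p -> Prop :=
| inK_gen (xi : 'I_p -> algC) (b : nat) :
    Q (Smat xi) -> inK Q (Smat xi *m Xmat p ^+ b)
| inK_one : inK Q 1%:M
| inK_mul A B : inK Q A -> inK Q B -> inK Q (A *m B)
| inK_inv A : inK Q A -> inK Q (invmx A).

Definition inZK (p : nat) (Q : 'M[algC]_p -> Prop) (A : 'M[algC]_p) : Prop :=
  inK Q A /\ forall B, inK Q B -> A *m B = B *m A.

Definition commut (p : nat) (A B : 'M[algC]_p) : 'M[algC]_p :=
  A *m B *m invmx A *m invmx B.

Arguments inTk p k S : clear implicits.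

From HB Require Import structures.
From mathcomp Require Import all_boot all_order all_algebra all_field.
From mathcomp Require Import ring.
Set Implicit Arguments. Unset Strict Implicit. Unset Printing Implicit Defensive.
Import Order.TTheory GRing.Theory Num.Theory.
Local Open Scope ring_scope.

(* Each [S_xi X^b] is a monomial matrix with weight [xi] and shift [b], and
   products of monomial matrices multiply weights along shifted indices, so
   [[M, M'] = omega^c] becomes the functional equation
     xi(i) xi'(i - b) = omega^c xi'(i) xi(i - b').
   When b is invertible mod p, the translation i |-> i - b has a single orbit,
   so any phi with phi(i - b) = lambda phi(i) is determined by phi(0); as p is
   odd, the product of the lambda^k over k < p is 1, so prod xi' = 1 forces
   xi'^p = 1, which gives (2).  For (3), chi is chosen so that N = M S_chi
   commutes with M'; then M' and N^y are monomial matrices with the same shift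
   b' commuting with N, hence proportional, and the factor is a p-th root of
   unity because all the weights have product 1. *)

Section MonomialMatrices.
Variables (R : pzRingType) (n : nat).
Local Notation p := n.+2.
Implicit Types (f g : 'I_p -> R) (k l : 'I_p).

Definition monomial_mx f k : 'M[R]_p := \matrix_(i, j) (f i * (i == j + k)%:R).

Lemma mulmx_monomial f g k l :
  monomial_mx f k *m monomial_mx g l =
  monomial_mx (fun i => f i * g (i - k)) (k + l).
Proof.
apply/matrixP => i j; rewrite !mxE (bigD1 (i - k)) //= big1 ?addr0.
  rewrite !mxE subrK eqxx mulr1 -mulrA; congr (_ * (_ * _)).
  by rewrite subr_eq -addrA (addrC l k).
move=> r /negbTE nr; rewrite !mxE.
have -> : (i == r + k) = false by rewrite -subr_eq eq_sym nr.
by rewrite mulr0 mul0r.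
Qed.

Lemma monomial_mx_inj f g k : monomial_mx f k = monomial_mx g k -> f =1 g.
Proof.
move=> eq_fg i; have := congr1 (fun A : 'M_p => A i (i - k)) eq_fg.
by rewrite /= !mxE subrK eqxx !mulr1.
Qed.

Lemma eq_monomial_mx f g k : f =1 g -> monomial_mx f k = monomial_mx g k.
Proof. by move=> eq_fg; apply/matrixP => i j; rewrite !mxE eq_fg. Qed.

Lemma scale_monomial_mx a f k :
  a *: monomial_mx f k = monomial_mx (fun i => a * f i) k.
Proof. by apply/matrixP => i j; rewrite !mxE mulrA. Qed.

Lemma monomial_mx1 : monomial_mx (fun _ => 1) 0 = 1%:M.
Proof. by apply/matrixP => i j; rewrite !mxE addr0 mul1r. Qed.

Lemma monomial_mxX f k m :
  monomial_mx f k ^+ m =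
  monomial_mx (fun i => \prod_(l < m) f (i - k *+ l)) (k *+ m).
Proof.
elim: m => [|m IHm].
  rewrite expr0 mulr0n (@eq_monomial_mx _ (fun _ => 1)) ?monomial_mx1 // => i.
  by rewrite big_ord0.
rewrite exprS IHm -mulmxE mulmx_monomial -mulrS; apply: eq_monomial_mx => i.
rewrite big_ord_recl subr0; congr (_ * _).
by apply: eq_bigr => l _; rewrite mulrS opprD addrA.
Qed.

Lemma monomial_commuteP f g k l a :
  monomial_mx f k *m monomial_mx g l = a *: (monomial_mx g l *m monomial_mx f k)
  <-> forall i, f i * g (i - k) = a * (g i * f (i - l)).
Proof.
rewrite !mulmx_monomial scale_monomial_mx (addrC l k).
by split=> [/monomial_mx_inj | /eq_monomial_mx].
Qed.

End MonomialMatrices.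

Lemma Zp_val_eq0 (n : nat) (x : 'I_n.+2) : nat_of_ord x = 0%N <-> x = 0.
Proof. by split=> [x0 | -> //]; apply: val_inj. Qed.

Lemma Zp_val_neq0 (n : nat) (x : 'I_n.+2) : nat_of_ord x <> 0%N -> x != 0.
Proof. by move=> nz_x; apply/eqP => /Zp_val_eq0. Qed.

Lemma Zp_unit (n : nat) (b : 'I_n.+2) : prime n.+2 -> b != 0 -> b \is a GRing.unit.
Proof.
move=> p_prime nz_b; have := unitZpE b (isT : 1 < n.+2)%N.
rewrite natr_Zp => ->; rewrite prime_coprime //.
by rewrite gtnNdvd // lt0n; apply: contra nz_b => /eqP b0; apply/eqP/val_inj.
Qed.

Lemma Zp_mulrnE (n : nat) (x k : 'I_n.+2) : x *+ k = x * k.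
Proof. by rewrite -mulr_natr natr_Zp. Qed.

Lemma Zp_mulrn_div (n : nat) (b i : 'I_n.+2) : b \is a GRing.unit -> b *+ (i / b)%R = i.
Proof. by move=> b_unit; rewrite Zp_mulrnE mulrCA mulrV // mulr1. Qed.

Section ShiftOrbit.
Variables (R : comPzRingType) (n : nat).
Local Notation p := n.+2.

Lemma prod_Zp_shift (f : 'I_p -> R) k : \prod_i f (i - k) = \prod_i f i.
Proof. by rewrite [RHS](reindex_inj (addIr (- k))). Qed.

Lemma prod_Zp_shift_powers (f : 'I_p -> R) k m :
  \prod_i \prod_(l < m) f (i - k *+ l) = (\prod_i f i) ^+ m.
Proof.
rewrite exchange_big (eq_bigr (fun=> \prod_i f i)) ?prodr_const ?card_ord // => l _.
exact: prod_Zp_shift.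
Qed.

Variables (b : 'I_p) (phi : 'I_p -> R) (a : R).
Hypothesis phi_shift : forall i, phi (i - b) = a * phi i.

Lemma shift_iter k i : phi (i - b *+ k) = a ^+ k * phi i.
Proof.
elim: k i => [|k IHk] i; first by rewrite mulr0n subr0 mul1r.
by rewrite mulrSr opprD addrA phi_shift IHk exprS mulrA.
Qed.

Hypothesis b_unit : b \is a GRing.unit.

Lemma shift_orbit0 i : phi 0 = a ^+ (i / b)%R * phi i.
Proof. by rewrite -shift_iter Zp_mulrn_div // subrr. Qed.

Lemma prod_shift_orbit : \prod_i phi i = a ^+ (\sum_(k < p) k) * phi 0 ^+ p.
Proof.
have inj_mulb : injective (fun k : 'I_p => 0 - b *+ k).
  by move=> k l /(congr1 -%R); rewrite !sub0r !opprK !Zp_mulrnE => /(mulrI b_unit).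
rewrite (reindex_inj inj_mulb) /=.
under eq_bigr do rewrite shift_iter.
by rewrite big_split /= prodrXr prodr_const card_ord.
Qed.

End ShiftOrbit.

Section RootsOfUnity.
Variables (R : pzRingType) (n : nat).
Local Notation p := n.+2.
Variable z : R.
Hypothesis z_order : z ^+ p = 1.

Lemma expr_ZpD (i j : 'I_p) : z ^+ (i + j)%R = z ^+ i * z ^+ j.
Proof. by rewrite -exprD -[in RHS](expr_mod _ z_order). Qed.

Lemma expr_ZpM (i j : 'I_p) : z ^+ (i * j)%N = z ^+ (i * j)%R.
Proof. by rewrite -(expr_mod _ z_order). Qed.

Lemma expr_sum_ord_odd : odd p -> z ^+ (\sum_(k < p) k) = 1.
Proof.
move=> p_odd; rewrite -(big_mkord xpredT id) bin2_sum bin2.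
by rewrite -(odd_halfK p_odd) -doubleMr doubleK exprM z_order expr1n.
Qed.

End RootsOfUnity.

Section Omega.
Variable n : nat.
Local Notation p := n.+2.

Lemma omega_expr_p : omega p ^+ p = 1.
Proof. by rewrite /omega -exprM mulnC exprM rootCK // sqrrN expr1n. Qed.

Lemma omega_prim : prime p -> p.-primitive_root (omega p).
Proof.
move=> p_prime; have [m prim_m m_dvd_p] := prim_order_exists (ltn0Sn _) omega_expr_p.
case/primeP: p_prime => _ /(_ m m_dvd_p) /orP[/eqP m1 | /eqP mp]; last by rewrite mp in prim_m.
move: prim_m; rewrite m1 => /prim_expr_order; rewrite expr1 /omega => /eqP.
(* [omega p = r ^+ 2] with [r = p.-root (-1)]: [r = 1] contradicts [r ^+ p = -1],
   and [r = -1] contradicts the choice of [r] with minimal argument. *)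
rewrite sqrf_eq1 => /orP[/eqP r1 | /eqP rN1].
  have := rootCK (ltn0Sn n.+1) (-1 : algC); rewrite r1 expr1n => /eqP.
  by rewrite -subr_eq0 opprK -mulr2n pnatr_eq0.
by have := @rootC_lt0 _ p (-1 : algC) isT; rewrite rN1 ltrN10.
Qed.

Lemma omega_neq0 : omega p != 0.
Proof.
apply/eqP => omega0; move: omega_expr_p.
by rewrite omega0 expr0n => /esym/eqP; rewrite oner_eq0.
Qed.

Lemma omega_expr_eq1 (c : 'I_p) : prime p -> (omega p ^+ c == 1) = (c == 0).
Proof.
move=> p_prime; rewrite -(prim_order_dvd (omega_prim p_prime)).
apply/idP/eqP => [p_dvd_c | ->]; last exact: dvdn0.
by apply/val_inj/eqP; rewrite /= -(modn_small (ltn_ord c)).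
Qed.

Definition omega_char (c : 'I_p) (q : 'I_p) : algC := omega p ^+ (c * q).

Lemma omega_charE c q : omega_char c q = omega p ^+ (c * q)%R.
Proof. exact: expr_ZpM omega_expr_p _ _. Qed.

Lemma omega_charD c i j : omega_char c (i + j) = omega_char c i * omega_char c j.
Proof. by rewrite !omega_charE mulrDr (expr_ZpD omega_expr_p). Qed.

Lemma omega_char_root c q : omega_char c q ^+ p = 1.
Proof. by rewrite exprAC omega_expr_p expr1n. Qed.

Lemma prod_omega_char c : odd p -> \prod_q omega_char c q = 1.
Proof.
move=> p_odd; rewrite /omega_char prodrXr -big_distrr /= exprM.
by apply: (expr_sum_ord_odd _ p_odd); rewrite exprAC omega_expr_p expr1n.
Qed.

End Omega.

Section MonomialField.
Variables (F : fieldType) (n : nat).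
Local Notation p := n.+2.
Implicit Types (f g h : 'I_p -> F) (k l : 'I_p).

Lemma monomial_mx_unit f k : (forall i, f i != 0) -> monomial_mx f k \in unitmx.
Proof.
move=> f_neq0; suff /mulmx1_unit[] : monomial_mx f k *m
    monomial_mx (fun i => (f (i + k))^-1) (- k) = 1%:M by [].
rewrite mulmx_monomial subrr -monomial_mx1.
by apply: eq_monomial_mx => i; rewrite subrK mulfV.
Qed.

Lemma commuting_monomials_proportional h g1 g2 b l :
    b \is a GRing.unit -> (forall i, h i != 0) -> (forall i, g2 i != 0) ->
    monomial_mx h b *m monomial_mx g1 l = monomial_mx g1 l *m monomial_mx h b ->
    monomial_mx h b *m monomial_mx g2 l = monomial_mx g2 l *m monomial_mx h b ->
  forall i, g1 i = g1 0 / g2 0 * g2 i.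
Proof.
move=> b_unit h_neq0 g2_neq0.
rewrite -[_ *m monomial_mx h b]scale1r => /monomial_commuteP g1_comm.
rewrite -[_ *m monomial_mx h b]scale1r => /monomial_commuteP g2_comm.
pose r i := g1 i / g2 i.
have r_shift i : r (i - b) = 1 * r i.
  have g1_shift : g1 (i - b) = g1 i * h (i - l) / h i.
    by rewrite -[g1 i * _]mul1r -g1_comm mulrC mulKf.
  have g2_shift : g2 (i - b) = g2 i * h (i - l) / h i.
    by rewrite -[g2 i * _]mul1r -g2_comm mulrC mulKf.
  rewrite /r g1_shift g2_shift mul1r; field.
  by rewrite h_neq0 g2_neq0 h_neq0.
by move=> i; rewrite -/(r 0) (shift_orbit0 r_shift b_unit i) expr1n mul1r divfK.
Qed.

End MonomialField.

Section SmatXmat.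
Variable n : nat.
Local Notation p := n.+2.
Implicit Types f g : 'I_p -> algC.

Lemma Smat_monomial f : Smat f = monomial_mx f 0.
Proof. by apply/matrixP => i j; rewrite !mxE addr0 mulr_natr. Qed.

Lemma Xmat_monomial : Xmat p = monomial_mx (fun _ => 1) 1.
Proof.
apply/matrixP => i j; rewrite !mxE mul1r; congr (_%:R).
by rewrite -val_eqE /= modnDmr addn1.
Qed.

Lemma SXmat_monomial f (b : 'I_p) : Smat f *m Xmat p ^+ b = monomial_mx f b.
Proof.
rewrite Smat_monomial Xmat_monomial monomial_mxX mulmx_monomial add0r Zp_mulrnE mul1r.
by apply: eq_monomial_mx => i; rewrite big1_eq mulr1.
Qed.

Lemma Smat_const f a : (forall i, f i = a) -> Smat f = a%:M.
Proof.
move=> f_const; rewrite -scalemx1 -monomial_mx1 scale_monomial_mx Smat_monomial.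
by apply: eq_monomial_mx => i; rewrite f_const mulr1.
Qed.

Lemma Smat_inj f g : Smat f = Smat g -> f =1 g.
Proof. by rewrite !Smat_monomial => /monomial_mx_inj. Qed.

Lemma inT_Smat f : inT (Smat f) -> (forall q, f q != 0) /\ \prod_q f q = 1.
Proof.
case=> g [/Smat_inj eq_fg [g_norm prod_g]]; split.
  by move=> q; rewrite -normr_eq0 eq_fg g_norm oner_eq0.
by under eq_bigr do rewrite eq_fg.
Qed.

Lemma inTk1_Smat f : \prod_q f q = 1 -> (forall q, f q ^+ p = 1) -> inTk p 1 (Smat f).
Proof.
move=> prod_f f_root; split.
  exists f; split=> //; split=> // q.
  by apply/eqP; rewrite -(@pexpr_eq1 _ _ p) // -normrX f_root normr1.
rewrite expn1 Smat_monomial monomial_mxX mul0rn -monomial_mx1.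
apply: eq_monomial_mx => i; under eq_bigr do rewrite mul0rn subr0.
by rewrite prodr_const card_ord f_root.
Qed.

Lemma commut_scalar (A B : 'M[algC]_p) a :
  A \in unitmx -> B \in unitmx -> commut A B = a%:M -> A *m B = a *: (B *m A).
Proof.
move=> A_unit B_unit commAB.
by rewrite -mul_scalar_mx -commAB mulmxA /commut mulmxKV // mulmxKV.
Qed.

End SmatXmat.

Section Commutation.
Variable n : nat.
Local Notation p := n.+2.
Variables (xi xi' : 'I_p -> algC) (b b' c : 'I_p).
Hypotheses (p_prime : prime p) (p_odd : odd p).
Hypotheses (xi_neq0 : forall i, xi i != 0) (xi'_neq0 : forall i, xi' i != 0).
Hypotheses (prod_xi : \prod_i xi i = 1) (prod_xi' : \prod_i xi' i = 1).
Hypothesis xi_comm : forall i, xi i * xi' (i - b) = omega p ^+ c * (xi' i * xi (i - b')).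

Lemma commutator_diag_trivial : b = 0 -> b' = 0 -> c = 0.
Proof.
move=> b0 b'0; apply/eqP; rewrite -(omega_expr_eq1 _ p_prime); apply/eqP.
apply: (mulIf (mulf_neq0 (xi'_neq0 0) (xi_neq0 0))).
have := xi_comm 0; rewrite b0 b'0 !subr0 => <-.
by rewrite mul1r mulrC.
Qed.

Lemma diag_commuting_shift : b' = 0 -> forall i, xi' (i - b) = omega p ^+ c * xi' i.
Proof. by move=> b'0 i; apply: (mulfI (xi_neq0 i)); rewrite xi_comm b'0 subr0; ring. Qed.

Lemma diag_commuting_root : b != 0 -> b' = 0 -> forall i, xi' i ^+ p = 1.
Proof.
move=> nz_b b'0 i; have b_unit := Zp_unit p_prime nz_b.
have shift := diag_commuting_shift b'0.
have omega_c_root : (omega p ^+ c) ^+ p = 1 by rewrite exprAC omega_expr_p expr1n.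
have xi'0_root : xi' 0 ^+ p = 1.
  by move: prod_xi'; rewrite (prod_shift_orbit shift b_unit) expr_sum_ord_odd // mul1r.
move: xi'0_root; rewrite (shift_orbit0 shift b_unit i).
by rewrite exprMn exprAC omega_c_root expr1n mul1r.
Qed.

Lemma diag_commuting_const : b != 0 -> b' = 0 -> c = 0 -> forall i, xi' i = xi' 0.
Proof.
move=> nz_b b'0 c0 i; have shift := diag_commuting_shift b'0.
by rewrite (shift_orbit0 shift (Zp_unit p_prime nz_b) i) c0 expr1n mul1r.
Qed.

Lemma monomial_commuting_power : b != 0 -> b' != 0 ->
  exists a : 'I_p, omega p ^+ a *: monomial_mx xi' b' =
    (monomial_mx xi b *m Smat (omega_char (- (c / b')))) ^+ (b' / b)%R.
Proof.
move=> nz_b nz_b'; have b_unit := Zp_unit p_prime nz_b.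
pose chi := omega_char (- (c / b')).
have chiD i j : chi (i + j) = chi i * chi j by apply: omega_charD.
have chi_b' : chi (- b') = omega p ^+ c.
  by rewrite /chi omega_charE mulrNN divrK // Zp_unit.
pose h i := xi i * chi (i - b).
have h_neq0 i : h i != 0 by rewrite mulf_neq0 // expf_neq0 // omega_neq0.
have N_def : monomial_mx xi b *m Smat chi = monomial_mx h b.
  by rewrite Smat_monomial mulmx_monomial addr0.
pose H i := \prod_(l < (b' / b)%R) h (i - b *+ l).
have N_pow : monomial_mx h b ^+ (b' / b)%R = monomial_mx H b'.
  by rewrite monomial_mxX (_ : b *+ _ = b') // Zp_mulrnE mulrC divrK.
have H_neq0 i : H i != 0 by apply/prodf_neq0 => l _.
(* [chi] is chosen so that [N = M S_chi] commutes with [M'] *)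
have N_comm_M' :
    monomial_mx h b *m monomial_mx xi' b' = monomial_mx xi' b' *m monomial_mx h b.
  rewrite -[RHS]scale1r; apply/monomial_commuteP => i.
  rewrite /h addrAC (chiD (i - b)) chi_b' mul1r.
  transitivity (xi i * xi' (i - b) * chi (i - b)); first ring.
  by rewrite xi_comm; ring.
have N_comm_H :
    monomial_mx h b *m monomial_mx H b' = monomial_mx H b' *m monomial_mx h b.
  by rewrite -N_pow !mulmxE -exprS exprSr.
have xi'_prop :=
  commuting_monomials_proportional b_unit h_neq0 H_neq0 N_comm_M' N_comm_H.
have prod_H : \prod_i H i = 1.
  rewrite prod_Zp_shift_powers big_split /= prod_xi (prod_Zp_shift chi).
  by rewrite prod_omega_char // mulr1 expr1n.
have d_root : (xi' 0 / H 0) ^+ p = 1.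
  move: prod_xi'; rewrite (eq_bigr _ (fun i _ => xi'_prop i)) big_split /= prod_H.
  by rewrite mulr1 prodr_const card_ord.
have [j d_def] := prim_rootP (omega_prim p_prime) d_root.
exists (- j); rewrite N_def N_pow scale_monomial_mx; apply: eq_monomial_mx => i.
by rewrite xi'_prop d_def mulrA -(expr_ZpD (omega_expr_p n)) addNr expr0 mul1r.
Qed.

End Commutation.

Theorem lemma3 (p m : nat) (xi xi' : 'I_p -> algC) (b b' c : 'I_p)
    (M M' : 'M[algC]_p) :
  prime p -> odd p -> (1 <= m)%N ->
  inTk p m (Smat xi) -> inTk p m (Smat xi') ->
  M = Smat xi *m Xmat p ^+ b -> M' = Smat xi' *m Xmat p ^+ b' ->
  inK (inTk p m) M -> inK (inTk p m) M' ->
  commut M M' = (omega p ^+ c)%:M ->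
  [/\
    (* (1) *)
    (nat_of_ord b = 0%N -> nat_of_ord b' = 0%N ->
       [/\ inTk p m M, inTk p m M' & nat_of_ord c = 0%N]),
    (* (2) *)
    (nat_of_ord b <> 0%N -> nat_of_ord b' = 0%N ->
       inTk p 1 M' /\ (nat_of_ord c = 0%N -> inZK (inTk p m) M')) &
    (* (3) *)
    (nat_of_ord b <> 0%N -> nat_of_ord b' <> 0%N ->
       exists (a y c' : 'I_p),
         let chi := fun q : 'I_p => omega p ^+ (c' * q) in
         [/\ ((b' * c' + c) %% p = 0)%N,
             ((y * b) %% p = b')%N,
             inTk p 1 (Smat chi),
             omega p ^+ a *: M' = (M *m Smat chi) ^+ y &
             (nat_of_ord c = 0%N -> omega p ^+ a *: M' = M ^+ y)])].
Proof.
case: p xi xi' b b' c M M' => [|[|n]] // xi xi' b b' c M M' p_prime p_odd _ Txi Txi'.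
rewrite !SXmat_monomial => -> -> _ KM' commMM'.
have [xi_neq0 prod_xi] := inT_Smat Txi.1.
have [xi'_neq0 prod_xi'] := inT_Smat Txi'.1.
have /monomial_commuteP xi_comm := commut_scalar
  (monomial_mx_unit b xi_neq0) (monomial_mx_unit b' xi'_neq0) commMM'.
split.
- move=> /Zp_val_eq0 b0 /Zp_val_eq0 b'0; rewrite b0 b'0 -!Smat_monomial; split=> //.
  exact/Zp_val_eq0/(commutator_diag_trivial p_prime xi_neq0 xi'_neq0 xi_comm).
- move=> /Zp_val_neq0 nz_b /Zp_val_eq0 b'0; rewrite b'0 -Smat_monomial in KM' *; split.
    exact/inTk1_Smat/(diag_commuting_root p_prime p_odd xi_neq0 prod_xi' xi_comm).
  move=> /Zp_val_eq0 c0.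
  have xi'_const := diag_commuting_const p_prime xi_neq0 xi_comm nz_b b'0 c0.
  rewrite (Smat_const xi'_const) in KM' *.
  by split=> // B _; rewrite scalar_mxC.
move=> /Zp_val_neq0 nz_b /Zp_val_neq0 nz_b'.
have [a M'_power] :=
  monomial_commuting_power p_prime p_odd xi_neq0 prod_xi prod_xi' xi_comm nz_b nz_b'.
exists a, (b' / b)%R, (- (c / b'))%R => chi; split=> //.
- have /(congr1 val) /= : b' * - (c / b') + c = 0.
    by rewrite mulrN mulrCA mulrV ?Zp_unit // mulr1 addNr.
  by rewrite modnDml.
- by have /(congr1 val) := divrK (Zp_unit p_prime nz_b) b'.
- exact: inTk1_Smat (prod_omega_char _ p_odd) (omega_char_root _).
by move=> /Zp_val_eq0 c0; rewrite M'_power c0 mul0r oppr0 (@Smat_const _ _ 1) ?mulmx1.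
Qed.
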